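(* For all natural numbers $t\ge 6$ and $s\ge 5$, $\mathrm{toi}(K_{2t}\times K_s)\ge ts$.
   Context: All graphs are finite, simple and loopless. A graph $G$ contains a graph $F$ as a totally odd strong immersion if there is an injective map $\varphi\colon V(F)\to V(G)$ (terminals) and, for every edge $uv\in E(F)$, a path $P_{uv}$ in $G$ with endpoints $\varphi(u),\varphi(v)$, such that the paths are pairwise edge-disjoint, no terminal is an interior vertex of any of them, and every $P_{uv}$ has odd length. $\mathrm{toi}(G)$ is the maximum $t$ such that $G$ contains $K_t$ as a totally odd strong immersion. The direct product $G\times H$ has vertex set $V(G)\times V(H)$, with $(g_1,h_1)\sim(g_2,h_2)$ iff $g_1g_2\in E(G)$ and $h_1h_2\in E(H)$. *)

From mathcomp Require Import all_boot.
Set Implicit Arguments. Unset Strict Implicit. Unset Printing Implicit Defensive.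

Definition simple_graph (V : finType) (adj : rel V) : Prop :=
  symmetric adj /\ irreflexive adj.

(* A path in G: start vertex x followed by sequence p of further vertices,
   consecutive vertices adjacent, all vertices distinct. Its endpoints are
   x and last x p, its length is size p, its interior vertices are belast of p. *)
Definition is_path (V : finType) (adj : rel V) (x : V) (p : seq V) : bool :=
  path adj x p && uniq (x :: p).

Definition walk_edges (V : finType) (x : V) (p : seq V) : seq (V * V) :=
  zip (x :: p) p.

Definition edge_disjoint (V : finType) (x : V) (p : seq V) (y : V) (q : seq V) : bool :=
  all (fun e => ((e.1, e.2) \notin walk_edges y q) && ((e.2, e.1) \notin walk_edges y q))
      (walk_edges x p).

Definition interior (V : finType) (x : V) (p : seq V) : seq V := behead (belast x p).

(* G contains K_t as a totally odd strong immersion: terminals phi (injective)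
   and for every pair i < j of vertices of K_t an odd-length path
   from phi i to phi j, pairwise edge-disjoint, avoiding terminals in interiors. *)
Definition toi_immersion (V : finType) (adj : rel V) (t : nat) : Prop :=
  exists (phi : 'I_t -> V) (P : 'I_t -> 'I_t -> seq V),
    injective phi /\
    (forall i j : 'I_t, i < j ->
       [/\ is_path adj (phi i) (P i j),
           last (phi i) (P i j) = phi j,
           odd (size (P i j)) &
           forall k : 'I_t, phi k \notin interior (phi i) (P i j)]) /\
    (forall i j k l : 'I_t, i < j -> k < l -> (i, j) != (k, l) ->
       edge_disjoint (phi i) (P i j) (phi k) (P k l)).

Definition toi_ge (V : finType) (adj : rel V) (m : nat) : Prop :=
  exists t, m <= t /\ toi_immersion adj t.

Definition K_adj (n : nat) : rel 'I_n := fun a b => a != b.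

Definition dprod_adj (U W : finType) (a : rel U) (b : rel W) : rel (U * W) :=
  fun x y => a x.1 y.1 && b x.2 y.2.

From mathcomp Require Import all_boot zify.
Set Implicit Arguments. Unset Strict Implicit. Unset Printing Implicit Defensive.

(** Write the vertices of K_2t x K_s as cells (row, column), two cells being
adjacent when they differ in both coordinates. The ts terminals are the cells
of the first t rows; the other t rows are hubs, the hub row t + a serving
terminal row a. Two terminals in different rows and columns are joined by an
edge. Terminals in the same column are joined by a path of length 3 through
the hub rows of their own rows, shifted one column to either side; terminals
in the same row by a path of length 3 through the hub rows of that row and of
the next one (cyclically). Every edge used determines the pair of terminals
whose path uses it, which makes the paths pairwise edge-disjoint; this
decoding needs t >= 3 and s >= 5, and the orientation of the same-row paths
must be chosen so that they cannot be mistaken for same-column paths. *)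

Definition owned_by (T K : eqType) (owner : T -> T -> K) (k : K) (e : T * T) : bool :=
  (owner e.1 e.2 == k) && (owner e.2 e.1 == k).

Lemma owned_by_swap (T K : eqType) (owner : T -> T -> K) k (x y : T) :
  owned_by owner k (x, y) = owned_by owner k (y, x).
Proof. exact: andbC. Qed.

Lemma edge_disjoint_owned (V : finType) (K : eqType) (owner : V -> V -> K) (k k' : K)
    (x : V) (p : seq V) (y : V) (q : seq V) :
  k != k' -> all (owned_by owner k) (walk_edges x p) ->
  all (owned_by owner k') (walk_edges y q) -> edge_disjoint x p y q.
Proof.
move=> neq_kk' /allP own_p /allP own_q; apply/allP => e /own_p /andP[/eqP own12 /eqP own21].
apply/andP; split; apply/negP => /own_q /andP[/eqP /= own' _]; move: neq_kk'.
- by rewrite -own12 own' eqxx.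
- by rewrite -own21 own' eqxx.
Qed.

Lemma map_pair_zip (T U : Type) (f : T -> U) (s1 s2 : seq T) :
  [seq (f e.1, f e.2) | e <- zip s1 s2] = zip (map f s1) (map f s2).
Proof. by elim: s1 s2 => [|x s1 IH] [|y s2] //=; rewrite IH. Qed.

Definition cell_adj (u v : nat * nat) : bool := (u.1 != v.1) && (u.2 != v.2).

Definition cell_path (u : nat * nat) (p : seq (nat * nat)) : bool :=
  path cell_adj u p && uniq (u :: p).

Section Grid.

Variables (n m : nat) (o : 'I_n * 'I_m).

Local Notation G := (dprod_adj (@K_adj n) (@K_adj m)).

Definition in_grid (u : nat * nat) : bool := (u.1 < n) && (u.2 < m).

Definition cell_of (v : 'I_n * 'I_m) : nat * nat := (val v.1, val v.2).

Definition vertex_of (u : nat * nat) : 'I_n * 'I_m := (insubd o.1 u.1, insubd o.2 u.2).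

Lemma vertex_ofK u : in_grid u -> cell_of (vertex_of u) = u.
Proof. by case: u => x y /andP[x_lt y_lt]; rewrite /cell_of /= !val_insubd x_lt y_lt. Qed.

Lemma map_vertex_ofK s : all in_grid s -> map cell_of (map vertex_of s) = s.
Proof. by elim: s => //= u s IH /andP[/vertex_ofK -> /IH ->]. Qed.

Lemma is_path_vertex_of u p :
  all in_grid (u :: p) -> cell_path u p -> is_path G (vertex_of u) (map vertex_of p).
Proof.
move=> /map_vertex_ofK grid_up /andP[path_up uniq_up].
rewrite -grid_up in uniq_up; case: grid_up => cell_u cell_p.
rewrite /is_path -map_cons (map_uniq uniq_up) andbT.
by rewrite -cell_u -cell_p path_map in path_up.
Qed.

Lemma owned_vertex_of (K : eqType) (owner : nat * nat -> nat * nat -> K) k u p :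
  all in_grid (u :: p) -> all (owned_by owner k) (zip (u :: p) p) ->
  all (owned_by (fun v w => owner (cell_of v) (cell_of w)) k)
      (walk_edges (vertex_of u) (map vertex_of p)).
Proof.
move=> /map_vertex_ofK grid_up; rewrite /walk_edges -map_cons.
rewrite (_ : owned_by _ k = preim (fun e => (cell_of e.1, cell_of e.2)) (owned_by owner k)) //.
by rewrite -all_map map_pair_zip grid_up; case: grid_up => _ ->.
Qed.

Lemma toi_immersion_of_routes (k : nat) (term : 'I_k -> nat * nat)
    (route : nat * nat -> nat * nat -> seq (nat * nat))
    (owner : nat * nat -> nat * nat -> (nat * nat) * (nat * nat)) :
  injective term -> (forall i, in_grid (term i)) ->
  (forall i j : 'I_k, i < j -> let u := term i in let p := route u (term j) in
    [/\ cell_path u p, last u p = term j, odd (size p), all in_grid p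
      & forall l, term l \notin behead (belast u p)]) ->
  (forall i j : 'I_k, i < j -> let u := term i in
    all (owned_by owner (u, term j)) (zip (u :: route u (term j)) (route u (term j)))) ->
  toi_immersion G k.
Proof.
move=> term_inj term_grid route_ok route_owned.
have grid_route (i j : 'I_k) : i < j -> all in_grid (term i :: route (term i) (term j)).
  by move=> /route_ok[_ _ _ grid_p _]; rewrite /= term_grid.
exists (fun i => vertex_of (term i)), (fun i j => map vertex_of (route (term i) (term j))).
split; [|split].
- by move=> i j /(congr1 cell_of); rewrite !vertex_ofK // => /term_inj.
- move=> i j lt_ij; have [path_p last_p odd_p _ avoid_p] := route_ok i j lt_ij.
  split; first exact: is_path_vertex_of (grid_route i j lt_ij) path_p.
  + by rewrite last_map last_p.
  + by rewrite size_map.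
  + move=> l; apply/negP; rewrite /interior belast_map behead_map => /(map_f cell_of).
    have /allP grid_ij := grid_route i j lt_ij.
    rewrite vertex_ofK // map_vertex_ofK ?(negbTE (avoid_p l)) //.
    by apply/allP => y /mem_behead/mem_belast/grid_ij.
- move=> i j i' j' lt_ij lt_ij' neq_ij.
  apply: (edge_disjoint_owned (k := (term i, term j)) (k' := (term i', term j'))).
  + apply: contra neq_ij => /eqP[/term_inj -> /term_inj ->]; exact: eqxx.
  + exact: owned_vertex_of (grid_route i j lt_ij) (route_owned i j lt_ij).
  + exact: owned_vertex_of (grid_route i' j' lt_ij') (route_owned i' j' lt_ij').
Qed.

End Grid.

Definition cyc_succ (n c : nat) : nat := if c.+1 < n then c.+1 else 0.
Definition cyc_pred (n c : nat) : nat := if 0 < c then c.-1 else n.-1.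

Ltac split_ifs :=
  repeat match goal with |- context [if ?b then _ else _] =>
    lazymatch b with
    | context [if _ then _ else _] => fail
    | _ => let E := fresh "E" in destruct b eqn:E
    end
  end.

Ltac cyc_lia := rewrite /cyc_succ /cyc_pred; split_ifs; lia.

Definition lex_lt (u v : nat * nat) : bool := (u.1 < v.1) || ((u.1 == v.1) && (u.2 < v.2)).

Section Routes.

Variables (t s : nat).

Definition terminal (u : nat * nat) : bool := (u.1 < t) && (u.2 < s).

Definition route (u v : nat * nat) : seq (nat * nat) :=
  if u.1 == v.1 then
    if (u.1.+1 < t) == (v.2 - u.2 <= s - 3)
    then [:: (t + u.1, v.2); (t + cyc_succ t u.1, u.2); v]
    else [:: (t + cyc_succ t u.1, v.2); (t + u.1, u.2); v]
  else if u.2 == v.2 then [:: (t + v.1, cyc_succ s u.2); (t + u.1, cyc_pred s u.2); v]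
  else [:: v].

(* Decodes the edge between terminal (a, c) and hub (t + r, d): the first edge
of a same-column path, its last edge, or an edge of a same-row path. *)
Definition hub_owner (a c r d : nat) : (nat * nat) * (nat * nat) :=
  if (a < r) && (d == cyc_succ s c) then ((a, c), (r, c))
  else if (r < a) && (d == cyc_pred s c) then ((r, c), (a, c))
  else ((a, minn c d), (a, maxn c d)).

(* Decodes the edge between hubs (t + p, x) and (t + q, y): the middle edge of
a same-column path joins columns two apart, that of a same-row path joins the
hub rows of a and of its cyclic successor. *)
Definition hubs_owner (p x q y : nat) : (nat * nat) * (nat * nat) :=
  if (q < p) && (x == cyc_succ s (cyc_succ s y)) then ((q, cyc_pred s x), (p, cyc_pred s x))
  else if (p < q) && (y == cyc_succ s (cyc_succ s x)) then ((p, cyc_pred s y), (q, cyc_pred s y))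
  else let a := if q == cyc_succ t p then p else q in ((a, minn x y), (a, maxn x y)).

Definition owner (u v : nat * nat) : (nat * nat) * (nat * nat) :=
  if u.1 < t then
    if v.1 < t then (if lex_lt u v then (u, v) else (v, u))
    else hub_owner u.1 u.2 (v.1 - t) v.2
  else if v.1 < t then hub_owner v.1 v.2 (u.1 - t) u.2
  else hubs_owner (u.1 - t) u.2 (v.1 - t) v.2.

Lemma owned_terminals u v : u.1 < t -> v.1 < t -> lex_lt u v -> owned_by owner (u, v) (u, v).
Proof.
move=> ut vt lt_uv; rewrite /owned_by /owner /= ut vt lt_uv eqxx /=.
by rewrite ifF // /lex_lt; apply/negbTE; move: lt_uv; rewrite /lex_lt; lia.
Qed.

Lemma owned_terminal_hub a c r d k : a < t -> hub_owner a c r d = k ->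
  owned_by owner k ((a, c), (t + r, d)).
Proof.
move=> a_lt <-; have tr_ge : ~~ (t + r < t) by lia.
by rewrite /owned_by /owner /= a_lt (negbTE tr_ge) addKn eqxx.
Qed.

Lemma owned_hubs p x q y k : hubs_owner p x q y = k -> hubs_owner q y p x = k ->
  owned_by owner k ((t + p, x), (t + q, y)).
Proof.
move=> <- sym; have tr_ge r : (t + r < t) = false by lia.
by rewrite /owned_by /owner /= !tr_ge !addKn sym eqxx.
Qed.

Lemma owned_col_first a a' b : a < a' -> a < t ->
  owned_by owner ((a, b), (a', b)) ((a, b), (t + a', cyc_succ s b)).
Proof. by move=> lt_aa' a_lt; apply: owned_terminal_hub; rewrite // /hub_owner lt_aa' eqxx. Qed.

Lemma owned_col_last a a' b : a < a' -> a' < t ->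
  owned_by owner ((a, b), (a', b)) ((a', b), (t + a, cyc_pred s b)).
Proof.
move=> lt_aa' a'_lt; apply: owned_terminal_hub; rewrite // /hub_owner lt_aa' eqxx.
by rewrite ifF //; apply/negbTE; lia.
Qed.

Lemma owned_col_hubs a a' b : a < a' -> b < s ->
  owned_by owner ((a, b), (a', b)) ((t + a', cyc_succ s b), (t + a, cyc_pred s b)).
Proof.
move=> lt_aa' b_lt; apply: owned_hubs; rewrite /hubs_owner.
all: have -> : cyc_succ s (cyc_succ s (cyc_pred s b)) = cyc_succ s b by cyc_lia.
all: have -> : cyc_pred s (cyc_succ s b) = b by cyc_lia.
all: by rewrite lt_aa' eqxx //= ifF //; apply/negbTE; lia.
Qed.

Lemma owned_row_terminal_hub a c r d : a < t ->
  ~~ ((a < r) && (d == cyc_succ s c)) -> ~~ ((r < a) && (d == cyc_pred s c)) ->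
  owned_by owner ((a, minn c d), (a, maxn c d)) ((a, c), (t + r, d)).
Proof.
move=> a_lt /negbTE not_first /negbTE not_last.
by apply: owned_terminal_hub; rewrite // /hub_owner not_first not_last.
Qed.

Lemma owned_row_hubs a x y : 2 < t -> a < t ->
  ~~ ((cyc_succ t a < a) && (x == cyc_succ s (cyc_succ s y))) ->
  ~~ ((a < cyc_succ t a) && (y == cyc_succ s (cyc_succ s x))) ->
  owned_by owner ((a, minn x y), (a, maxn x y)) ((t + a, x), (t + cyc_succ t a, y)).
Proof.
move=> t_gt2 a_lt /negbTE not_down /negbTE not_up.
have not_next2 : (a == cyc_succ t (cyc_succ t a)) = false by apply/negbTE; cyc_lia.
by apply: owned_hubs; rewrite /hubs_owner not_down not_up ?not_next2 ?eqxx // minnC maxnC.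
Qed.

Lemma route_odd_path u v : 1 < t -> 2 < s -> terminal u -> terminal v -> lex_lt u v ->
  let p := route u v in
  [/\ cell_path u p, last u p = v, odd (size p), all (in_grid (2 * t) s) p
    & all (fun y => t <= y.1) (behead (belast u p))].
Proof.
case: u v => a b [a' b'] t_gt1 s_gt2 /andP[/= a_lt b_lt] /andP[/= a'_lt b'_lt] lt_uv.
rewrite /lex_lt /= in lt_uv; rewrite /route /= /cell_path /cell_adj /in_grid /=.
case: (eqVneq a a') lt_uv => [<-|neq_aa'] lt_uv; last case: (eqVneq b b') => [<-|neq_bb'].
1: case: ifP => _.
all: split; rewrite /= ?inE ?xpair_eqE //; cyc_lia.
Qed.

Lemma route_owned u v : 2 < t -> 4 < s -> terminal u -> terminal v -> lex_lt u v ->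
  all (owned_by owner (u, v)) (zip (u :: route u v) (route u v)).
Proof.
case: u v => a b [a' b'] t_gt2 s_gt4 /andP[/= a_lt b_lt] /andP[/= a'_lt b'_lt] lt_uv.
rewrite /lex_lt /= in lt_uv; rewrite /route /=.
case: (eqVneq a a') lt_uv => [<-|neq_aa'] lt_uv; last first.
  have lt_aa' : a < a' by lia.
  case: (eqVneq b b') => [<-|neq_bb']; last first.
    by rewrite /= andbT; apply: owned_terminals; rewrite // /lex_lt lt_aa'.
  rewrite /= !andbT [owned_by _ _ (_, (a', b))]owned_by_swap; apply/and3P; split.
  - exact: owned_col_first.
  - exact: owned_col_hubs.
  - exact: owned_col_last.
have lt_bb' : b < b' by lia.
have -> : ((a, b), (a, b')) = ((a, minn b b'), (a, maxn b b')).
  by rewrite (minn_idPl (ltnW lt_bb')) (maxn_idPr (ltnW lt_bb')).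
case: ifP => orient; rewrite /= !andbT [owned_by _ _ (_, (a, b'))]owned_by_swap.
all: apply/and3P; split.
- by apply: owned_row_terminal_hub => //; cyc_lia.
- by rewrite minnC maxnC; apply: owned_row_hubs => //; cyc_lia.
- by rewrite minnC maxnC; apply: owned_row_terminal_hub => //; cyc_lia.
- by apply: owned_row_terminal_hub => //; cyc_lia.
- by rewrite owned_by_swap; apply: owned_row_hubs => //; cyc_lia.
- by rewrite minnC maxnC; apply: owned_row_terminal_hub => //; cyc_lia.
Qed.

End Routes.

Definition index_cell (s i : nat) : nat * nat := (i %/ s, i %% s).

Lemma index_cell_inj s : injective (index_cell s).
Proof. by move=> i j [div_ij mod_ij]; rewrite (divn_eq i s) (divn_eq j s) div_ij mod_ij. Qed.

Lemma lex_lt_index_cell s i j : i < j -> lex_lt (index_cell s i) (index_cell s j).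
Proof.
move=> lt_ij; rewrite /lex_lt /=.
have := leq_div2r s (ltnW lt_ij); rewrite leq_eqVlt => /orP[/eqP div_ij | ->] //.
by rewrite div_ij ltnn eqxx /=; have := divn_eq i s; have := divn_eq j s; rewrite div_ij; lia.
Qed.

Lemma terminal_index_cell t s i : i < t * s -> terminal t s (index_cell s i).
Proof.
move=> lt_i; have s_gt0 : 0 < s by case: s lt_i => //; rewrite muln0.
by rewrite /terminal /= ltn_divLR // lt_i ltn_pmod.
Qed.

Theorem mainTheorem4 (t s : nat) : 6 <= t -> 5 <= s ->
  toi_ge (dprod_adj (@K_adj (2 * t)) (@K_adj s)) (t * s).
Proof.
move=> t_ge6 s_ge5; exists (t * s); split=> //.
have [t2_gt0 s_gt0 t_gt2 s_gt4] : [/\ 0 < 2 * t, 0 < s, 2 < t & 4 < s] by split; lia.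
have term_ok (i : 'I_(t * s)) : terminal t s (index_cell s i).
  exact: terminal_index_cell (ltn_ord i).
apply: (toi_immersion_of_routes (Ordinal t2_gt0, Ordinal s_gt0) (route := route t s)
          (owner := owner t s) (term := fun i : 'I_(t * s) => index_cell s i)).
- by move=> i j /index_cell_inj /ord_inj.
- by move=> i; have /andP[/= ? ?] := term_ok i; rewrite /in_grid /=; lia.
- move=> i j lt_ij; have [t_gt1 s_gt2] : 1 < t /\ 2 < s by lia.
  have [path_p last_p odd_p grid_p hub_p] :=
    route_odd_path t_gt1 s_gt2 (term_ok i) (term_ok j) (lex_lt_index_cell s lt_ij).
  split=> // l; apply/negP => /(allP hub_p); have /andP[/= ? _] := term_ok l; lia.
- move=> i j lt_ij.
  exact: route_owned t_gt2 s_gt4 (term_ok i) (term_ok j) (lex_lt_index_cell s lt_ij).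
Qed.
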